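(* Let $\Sigma$ be a finite alphabet with $m=|\Sigma|$, and let $M=(Q,\Sigma,\delta,\vec q_0,F)$ be the deterministic finite automaton defined as follows. Fix a symbol $a_0\notin\Sigma$. The state set is $Q=P\times N\times C$ where $P=\Sigma\cup\{a_0\}$ (component $p$, the last input letter), $N=(\Sigma\cup\{\epsilon\})^{m+1}$ (component $\vec n=(n_d)_{d\in\Sigma\cup\{a_0\}}$, recording for each $d$ the letter most recently read right after $d$), and $C=\{\mathtt{WHITE},\mathtt{BLACK}\}^m$ (component $\vec c=(c_d)_{d\in\Sigma}$). The initial state is $\vec q_0=(a_0,\epsilon^{m+1},\mathtt{WHITE}^m)$ and the final states are $F=\{(p,\vec n,\vec c)\in Q:\vec c\neq\mathtt{BLACK}^m\}$. The transition $\delta((p,\vec n,\vec c),a)$ for $a\in\Sigma$ is computed by the following procedure: (1) if $n_p\neq\epsilon$ and $n_p\neq a$, then set $b\gets p$ and repeat \{$c_b\gets\mathtt{BLACK}$; $b\gets n_b$\} until $b=p$; (2) then, if $c_a=\mathtt{BLACK}$, set $\vec c\gets\mathtt{BLACK}^m$; (3) set $n_p\gets a$; (4) set $p\gets a$; the resulting $(p,\vec n,\vec c)$ is the new state. Then the language accepted by $M$ equals $L$, the language of unique Eulerian trails over $\Sigma$.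
   Context: For a word $t=t_1\cdots t_n$ over $\Sigma$ (viewed as a vertex set), $G(t)$ is the directed multigraph on $\Sigma$ with one edge $t_i\to t_{i+1}$ for each $1\le i<n$; a word $s=s_1\cdots s_k$ is an Eulerian trail of $G(t)$ if the multiset of pairs $\{(s_i,s_{i+1}):1\le i<k\}$ equals the multiset $\{(t_i,t_{i+1}):1\le i<n\}$ (trails are vertex sequences). The language $L\subseteq\Sigma^*$ consists of the empty word $\epsilon$ together with all nonempty words $t$ such that $t$ is the only Eulerian trail of $G(t)$ starting at the vertex $t_1$ (no word $s\neq t$ with $s_1=t_1$ is an Eulerian trail of $G(t)$). *)

From mathcomp Require Import all_boot.
Set Implicit Arguments. Unset Strict Implicit. Unset Printing Implicit Defensive.

Section Euler.
Variable S : finType.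

(* Multiset (as a list) of the edges t_i -> t_{i+1} of G(t). *)
Definition edges (t : seq S) : seq (S * S) := zip t (behead t).

(* t is in L: t = epsilon, or t is the only Eulerian trail of G(t) starting at t_1.
   An Eulerian trail s of G(t) with s_1 = t_1 is a word x :: s' whose edge multiset
   equals that of t. *)
Definition inL (t : seq S) : Prop :=
  match t with
  | [::] => True
  | x :: _ => forall s' : seq S, perm_eq (edges (x :: s')) (edges t) -> x :: s' = t
  end.

(* P = Sigma + {a0}        : option S, None = a0
   N = (Sigma + {eps})^(Sigma + {a0}) : {ffun option S -> option S}, value None = eps
   C = {WHITE,BLACK}^Sigma : {ffun S -> bool}, true = BLACK *)
Definition Pst := option S.
Definition Nst := {ffun option S -> option S}.
Definition Cst := {ffun S -> bool}.
Definition state := (Pst * Nst * Cst)%type.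

Definition blacken1 (c : Cst) (b : Pst) : Cst :=
  match b with
  | Some d => [ffun e => (e == d) || c e]
  | None => c  (* c has no a0 component; never happens on reachable states *)
  end.

(* Step (1): b <- p; repeat { c_b <- BLACK; b <- n_b } until b = p.
   Executed with fuel (#|S|.+1 iterations, which suffices whenever the loop
   terminates, since P has #|S|.+1 elements); it also stops if b becomes eps. *)
Fixpoint blacken_loop (fuel : nat) (p : Pst) (n : Nst) (b : Pst) (c : Cst) : Cst :=
  match fuel with
  | 0 => c
  | k.+1 =>
    let c' := blacken1 c b in
    match n b with
    | None => c'
    | Some d => if Some d == p then c' else blacken_loop k p n (Some d) c'
    end
  end.

Definition delta (q : state) (a : S) : state :=
  let: (p, n, c) := q in
  let c1 := if (n p != None) && (n p != Some a)
            then blacken_loop #|S|.+1 p n p c else c in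
  let c2 := if c1 a then [ffun => true] else c1 in
  let n' := [ffun d => if d == p then Some a else n d] in
  (Some a, n', c2).

Definition q0 : state := (None, [ffun => None], [ffun => false]).

Definition final (q : state) : bool := let: (_, _, c) := q in [exists d, ~~ c d].

Definition accepts (w : seq S) : bool := final (foldl delta q0 w).

End Euler.

From mathcomp Require Import all_boot zify.
From Stdlib Require Import Classical.
Set Implicit Arguments. Unset Strict Implicit. Unset Printing Implicit Defensive.

(* A word is the only Eulerian trail of its graph from its first letter iff it has no
   [swap_pattern]: otherwise two detours from a letter can be exchanged, and if there
   is none, every trail with the same edges takes the same first step, hence by
   induction is the word itself.  While the word read so far is pattern-free, the
   automaton keeps in [n] the successor of the last exit from each letter and colours
   BLACK exactly the [forbidden] letters, whose next occurrence would complete a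
   pattern; when the current letter [p] is left through a new edge, the blackening
   loop follows [n] from [p] around a cycle, and every newly forbidden letter is on
   that cycle or was already forbidden. *)

Section UniqueEulerianTrails.
Variables (S : finType) (x0 : S).
Implicit Types (s t u v : seq S).
Local Notation "t `_ i" := (nth x0 t i).

(** * Words with a unique Eulerian trail *)

Lemma edges_cons x y s : edges (x :: y :: s) = (x, y) :: edges (y :: s).
Proof. by []. Qed.

Lemma size_edges s : size (edges s) = (size s).-1.
Proof. by rewrite /edges size_zip size_behead; case: s => //= _ s; lia. Qed.

Lemma mem_edgesP a b s : (a, b) \in edges s ->
  exists k, [/\ k.+1 < size s, s`_k = a & s`_k.+1 = b].
Proof.
elim: s => [|x [|y s] IH] //; rewrite edges_cons in_cons.
case/orP=> [/eqP [<- <-]|/IH [k [ks <- <-]]]; first by exists 0.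
by exists k.+1.
Qed.

Lemma mem_edges_fst a b s : (a, b) \in edges s -> a \in s.
Proof. by case/mem_edgesP=> k [ks <- _]; rewrite mem_nth // ltnW. Qed.

Lemma edges_cat x u v : edges (x :: u ++ v) = edges (x :: u) ++ edges (last x u :: v).
Proof. by elim: u x => [|y u IH] x //; rewrite cat_cons edges_cons IH. Qed.

Lemma edges_cat_cons u y v : edges (u ++ y :: v) = edges (rcons u y) ++ edges (y :: v).
Proof.
by case: u => [|x u] //; rewrite cat_cons edges_cat -cats1 edges_cat -catA.
Qed.

Definition swap_pattern t := exists i j k l,
  [/\ i < j, j <= k, k < l, l < size t &
      [/\ t`_i = t`_k, t`_j = t`_l & t`_i.+1 <> t`_k.+1]].

Lemma swap_pattern_catl u t : swap_pattern t -> swap_pattern (u ++ t).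
Proof.
case=> i [j [k [l [ij jk kl lt [eik ejl nik]]]]].
exists (size u + i), (size u + j), (size u + k), (size u + l).
by rewrite -!addnS !nth_cat size_cat !ltnNge !leq_addr /= !addKn; split => //; lia.
Qed.

Lemma edges_closed_walk (P : S -> Prop) (E : seq (S * S)) z r :
  (forall a b, (a, b) \in E -> P a -> P b) -> P z ->
  {subset edges (z :: r) <= E} -> forall y, y \in z :: r -> P y.
Proof.
move=> closedP; elim: r z => [|y r IH] z Pz sub w; first by rewrite mem_seq1 => /eqP ->.
rewrite in_cons => /orP [/eqP -> //|]; apply: IH => [|e re].
  by apply: (closedP z) => //; apply: sub; rewrite edges_cons mem_head.
by apply: sub; rewrite edges_cons in_cons re orbT.
Qed.

(* Without a pattern, the letters read after the edge [(p, b)] of [p :: a :: t] form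
   a set closed under its edges that misses [p]; a trail leaving [p] through [b] could
   then never come back to use the edge [(p, a)]. *)
Lemma no_pattern_first_step p a b s t :
  ~ swap_pattern [:: p, a & t] ->
  perm_eq (edges [:: p, b & s]) (edges [:: p, a & t]) -> b = a.
Proof.
set w := [:: p, a & t] => nop perm_w; case: (eqVneq b a) => // ba; exfalso.
have [k [kw wk wk1]] : exists k, [/\ k.+1 < size w, w`_k = p & w`_k.+1 = b].
  by apply: mem_edgesP; rewrite -(perm_mem perm_w) mem_head.
have k0 : 0 < k by case: k wk1 {kw wk} => //= ab; rewrite ab eqxx in ba.
have sep j l : 0 < j <= k -> k < l < size w -> w`_j <> w`_l.
  move=> /andP [j0 jk] /andP [kl lw] ejl; apply: nop.
  by exists 0, j, k, l; split => //; split => //; rewrite wk1 => /esym/eqP; rewrite (negbTE ba).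
pose late y := exists l, k < l < size w /\ w`_l = y.
have late_p : ~ late p.
  by case=> l [kl wl]; apply: (sep k l) => //; rewrite ?k0 ?leqnn // wk.
have late_closed c d : (c, d) \in edges w -> late c -> late d.
  case/mem_edgesP=> m [mw <- <-] [l [kl wl]].
  case: (ltnP k m) => km; first by exists m.+1; rewrite mw andbT; split => //; lia.
  case: m {mw} km wl => [|m] km wl; first by case: late_p; exists l.
  by case: (sep m.+1 l).
have /mem_edges_fst p_late : (p, a) \in edges (b :: s).
  move: (perm_mem perm_w (p, a)).
  by rewrite mem_head edges_cons in_cons xpair_eqE eq_sym (negbTE ba) andbF.
apply/late_p/(edges_closed_walk late_closed _ _ p_late).
  by exists k.+1; split; rewrite ?kw //; lia.
by move=> e es; rewrite -(perm_mem perm_w) edges_cons in_cons es orbT.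
Qed.

Lemma no_pattern_trail_unique x u s t :
  ~ swap_pattern (x :: u ++ t) ->
  perm_eq (edges (x :: u ++ s)) (edges (x :: u ++ t)) -> s = t.
Proof.
elim: t u s => [|a t IH] u [|b s] nop perm_st //;
  try by have := perm_size perm_st; rewrite !size_edges /= !size_cat /=; lia.
have ba : b = a.
  apply: (no_pattern_first_step (p := last x u) (s := s) (t := t)).
    by move=> /(swap_pattern_catl (belast x u)); rewrite -cat_rcons -lastI.
  by move: perm_st; rewrite !edges_cat perm_cat2l.
by subst b; congr (_ :: _); apply: (IH (rcons u a)); rewrite !cat_rcons.
Qed.

Lemma inL_of_no_pattern t : ~ swap_pattern t -> inL t.
Proof. by case: t => //= x t nop s perm_st; rewrite (@no_pattern_trail_unique x [::] s t). Qed.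

Lemma swap_pattern_decomposition t : swap_pattern t ->
  exists A P Q R B X Y,
    [/\ t = A ++ X :: P ++ Q ++ X :: R ++ Y :: B, head X (P ++ Q) <> head Y R &
        Q = [::] /\ X = Y \/ exists Q', Q = Y :: Q'].
Proof.
case=> i [j [k [l [ij jk kl lt [eik ejl nik]]]]].
have drop_split m n : m <= n -> drop m t = take (n - m) (drop m t) ++ drop n t.
  by move=> mn; rewrite -{1}(cat_take_drop (n - m) (drop m t)) drop_drop subnK.
set X := t`_i; set Y := t`_j.
set P := take (j - i.+1) (drop i.+1 t); set Q := take (k - j) (drop j t).
set R := take (l - k.+1) (drop k.+1 t); set B := drop l.+1 t.
have dk1 : drop k.+1 t = R ++ Y :: B by rewrite (drop_split k.+1 l) // /Y ejl -drop_nth.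
have dk : drop k t = X :: R ++ Y :: B by rewrite /X eik -dk1 -drop_nth //; lia.
have dj : drop j t = Q ++ X :: R ++ Y :: B by rewrite (drop_split j k) // dk.
have di1 : drop i.+1 t = P ++ Q ++ X :: R ++ Y :: B by rewrite (drop_split i.+1 j) // dj.
have nth_head m : t`_m = head x0 (drop m t).
  by rewrite -[in LHS](addn0 m) -nth_drop; case: (drop m t).
have head_cat_cons Z s r : head x0 (s ++ Z :: r) = head Z s by case: s.
exists (take i t), P, Q, R, B, X, Y; split.
- by rewrite -di1 -drop_nth -?(ltn_trans ij) ?cat_take_drop //; lia.
- move=> ePR; apply: nik.
  by rewrite (nth_head i.+1) (nth_head k.+1) di1 dk1 catA !head_cat_cons.
- case: (ltnP j k) => [jk'|kj]; last first.
    have ekj : k = j by lia.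
    by left; rewrite /Q /X /Y ekj subnn take0 eik ekj.
  right; rewrite /Q (drop_nth x0); last lia.
  by rewrite -(ltn_predK (n := k - j) (m := 0)) ?subn_gt0 //; eexists.
Qed.

Lemma perm_edges_swap (A P Q R B : seq S) (X Y : S) :
  Q = [::] /\ X = Y \/ (exists Q', Q = Y :: Q') ->
  perm_eq (edges (A ++ X :: R ++ Q ++ X :: P ++ Y :: B))
          (edges (A ++ X :: P ++ Q ++ X :: R ++ Y :: B)).
Proof.
case=> [[-> <-]|[Q' ->]] /=.
  rewrite (edges_cat_cons A) (edges_cat_cons A) (edges_cat_cons (X :: R))
    (edges_cat_cons (X :: P)) (edges_cat_cons (X :: P)) (edges_cat_cons (X :: R)).
  by apply/permP => f; rewrite !count_cat; lia.
rewrite (edges_cat_cons A) (edges_cat_cons A) (edges_cat_cons (X :: R))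
  (edges_cat_cons (X :: P)) (edges_cat_cons (Y :: Q')) (edges_cat_cons (Y :: Q'))
  (edges_cat_cons (X :: P)) (edges_cat_cons (X :: R)).
by apply/permP => f; rewrite !count_cat; lia.
Qed.

Lemma swap_pattern_notinL t : swap_pattern t -> ~ inL t.
Proof.
case/swap_pattern_decomposition=> A [P [Q [R [B [X [Y [-> nPR hQ]]]]]]] inLt.
have : A ++ X :: R ++ Q ++ X :: P ++ Y :: B = A ++ X :: P ++ Q ++ X :: R ++ Y :: B.
  by case: A inLt => [|a A] inLt; apply: inLt; apply: perm_edges_swap.
move/eqP; rewrite eqseq_cat // eqseq_cons !eqxx /= => /eqP e.
apply: nPR; case: R P hQ e {inLt} => [|r R] [|p P] [[-> <-]|[Q' ->]] //= [] -> //.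
Qed.

Lemma inL_swap_patternN t : inL t <-> ~ swap_pattern t.
Proof. by split=> [inLt /swap_pattern_notinL | /inL_of_no_pattern]. Qed.

(** * Extending a pattern-free word *)

Lemma nth_rcons_lt t a i : i < size t -> (rcons t a)`_i = t`_i.
Proof. by rewrite nth_rcons => ->. Qed.

Lemma nth_rcons_size t a : (rcons t a)`_(size t) = a.
Proof. by rewrite nth_rcons ltnn eqxx. Qed.

Definition forbidden t d := exists i j k,
  [/\ i < j, j <= k, k.+1 < size t & [/\ t`_i = t`_k, t`_i.+1 <> t`_k.+1 & t`_j = d]].

Definition forbidden_by_step t a d := exists i j,
  [/\ i < j, j < size t & [/\ t`_i = t`_(size t).-1, t`_i.+1 <> a & t`_j = d]].

Lemma swap_pattern_rcons t a : swap_pattern t -> swap_pattern (rcons t a).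
Proof.
case=> i [j [k [l [ij jk kl lt [eik ejl nik]]]]].
exists i, j, k, l; rewrite size_rcons !nth_rcons_lt; try lia.
by split => //; lia.
Qed.

Lemma swap_pattern_rconsE t a : 0 < size t -> ~ swap_pattern t ->
  swap_pattern (rcons t a) <-> forbidden t a \/ forbidden_by_step t a a.
Proof.
move=> t0 nop; split.
  case=> i [j [k [l [ij jk kl]]]]; rewrite size_rcons ltnS leq_eqVlt.
  case/orP=> [/eqP el|lt]; last first.
    by rewrite !nth_rcons_lt; try lia; case=> *; case: nop; exists i, j, k, l.
  rewrite el nth_rcons_size; case: (ltnP k.+1 (size t)) => kt.
    by rewrite !nth_rcons_lt; try lia; case=> *; left; exists i, j, k.
  have ek : k = (size t).-1 by lia.
  rewrite {2}ek (prednK t0) nth_rcons_size !nth_rcons_lt; try lia.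
  by case=> *; right; exists i, j; rewrite -ek; split => //; lia.
case=> [[i [j [k [ij jk kt [eik nik ej]]]]]|[i [j [ij jt [ei nia ej]]]]].
  exists i, j, k, (size t); rewrite size_rcons nth_rcons_size !nth_rcons_lt; try lia.
  by split => //; lia.
exists i, j, (size t).-1, (size t); rewrite size_rcons nth_rcons_size (prednK t0).
by rewrite nth_rcons_size !nth_rcons_lt; try lia; split => //; lia.
Qed.

Lemma forbidden_rcons t a d : 0 < size t ->
  forbidden (rcons t a) d <-> forbidden t d \/ forbidden_by_step t a d.
Proof.
move=> t0; split.
  case=> i [j [k [ij jk]]]; rewrite size_rcons ltnS leq_eqVlt.
  case/orP=> [/eqP ek|kt]; last first.
    by rewrite !nth_rcons_lt; try lia; case=> *; left; exists i, j, k.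
  have ek' : k = (size t).-1 by lia.
  rewrite ek nth_rcons_size !nth_rcons_lt; try lia.
  by case=> *; right; exists i, j; rewrite -ek'; split => //; lia.
case=> [[i [j [k [ij jk kt [eik nik ej]]]]]|[i [j [ij jt [ei nia ej]]]]].
  by exists i, j, k; rewrite size_rcons !nth_rcons_lt; try lia; split => //; lia.
exists i, j, (size t).-1; rewrite size_rcons (prednK t0) nth_rcons_size !nth_rcons_lt; try lia.
by split => //; lia.
Qed.

Lemma not_forbidden_last t : 0 < size t -> ~ swap_pattern t -> ~ forbidden t t`_(size t).-1.
Proof.
move=> t0 nop [i [j [k [ij jk kt [eik nik ej]]]]]; apply: nop.
by exists i, j, k, (size t).-1; split => //; lia.
Qed.

(** * The invariant of the automaton *)

Definition last_exit t x i :=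
  [/\ i.+1 < size t, t`_i = x & forall i', i < i' -> i'.+1 < size t -> t`_i' <> x].

Definition tracks_next t (n : Nst S) :=
  (forall x y, n (Some x) = Some y -> exists i, last_exit t x i /\ t`_i.+1 = y) /\
  (forall x i, i.+1 < size t -> t`_i = x -> n (Some x) <> None).

Lemma last_exit_max t x i k : last_exit t x i -> k.+1 < size t -> t`_k = x -> k <= i.
Proof. by case=> _ _ later kt tk; case: (leqP k i) => // /later /(_ kt). Qed.

Lemma last_exit_uniq t x i i' : last_exit t x i -> last_exit t x i' -> i = i'.
Proof.
move=> ei ei'; apply/eqP; rewrite eqn_leq.
have [it ti _] := ei; have [it' ti' _] := ei'.
by rewrite (last_exit_max ei') ?(last_exit_max ei).
Qed.

Lemma tracks_next_rcons t n a : 0 < size t -> tracks_next t n ->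
  tracks_next (rcons t a) [ffun d => if d == Some (last x0 t) then Some a else n d].
Proof.
move=> t0 [next_exit next_def]; rewrite -(nth_last x0); split=> x.
  move=> y; rewrite ffunE; case: eqP => [[->] [<-]|nx].
    exists (size t).-1; rewrite /last_exit size_rcons (prednK t0) nth_rcons_size.
    by rewrite nth_rcons_lt; [split => //; split => //; lia | lia].
  case/next_exit=> i [[it ti later] ty]; exists i.
  rewrite /last_exit size_rcons !nth_rcons_lt; try lia.
  split => //; split => //; first lia.
  move=> k ik; rewrite ltnS leq_eqVlt => /orP [/eqP kt|kt].
    by rewrite nth_rcons_lt -?kt // => tkx; apply: nx; rewrite -tkx -kt.
  by rewrite nth_rcons_lt; [apply: later | lia].
move=> i; rewrite size_rcons ffunE ltnS leq_eqVlt => /orP [/eqP it|it].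
  by rewrite nth_rcons_lt => [<-|]; [rewrite -it /= eqxx | lia].
by rewrite nth_rcons_lt; try lia; move=> ti; case: eqP => // _; apply: (next_def x i).
Qed.

Implicit Types (n : Nst S) (c : Cst S).

Lemma blacken_loop_mono f (p b : Pst S) n c d : c d -> blacken_loop f p n b c d.
Proof.
elim: f b c => [|f IH] b c //= cd.
have c'd : blacken1 c b d by case: b => [x|] //=; rewrite ffunE cd orbT.
by case: (n b) => [z|] //; case: ifP => // _; apply: IH.
Qed.

Lemma blacken_loop_start f (p : Pst S) n x c : blacken_loop f.+1 p n (Some x) c x.
Proof.
have c'x : blacken1 c (Some x) x by rewrite /= ffunE eqxx.
by rewrite /=; case: (n (Some x)) => [z|] //; case: ifP => // _; apply: blacken_loop_mono.
Qed.

Lemma blacken_loop_closed (P : S -> Prop) f p n x c d :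
  P x -> (forall y z, P y -> n (Some y) = Some z -> P z) ->
  blacken_loop f (Some p) n (Some x) c d -> c d \/ P d.
Proof.
move=> + closedP; elim: f x c => [|f IH] x c Px /=; first by left.
have c'P : blacken1 c (Some x) d -> c d \/ P d.
  by rewrite /= ffunE => /orP [/eqP ->|]; [right | left].
case nx: (n (Some x)) => [z|]; last exact: c'P.
case: ifP => _; first exact: c'P.
by case/(IH z _ (closedP x z Px nx)) => [/c'P|]; last right.
Qed.

Inductive next_path n (p : S) : S -> S -> Prop :=
  | next_path_nil x : next_path n p x x
  | next_path_cons x z y :
      n (Some x) = Some z -> z <> p -> next_path n p z y -> next_path n p x y.

Lemma next_path_rcons n p x y z :
  next_path n p x y -> n (Some y) = Some z -> z <> p -> next_path n p x z.
Proof.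
elim=> [{}x|{}x x' {}y xx' x'p _ IH] yz zp.
  exact: next_path_cons yz zp (next_path_nil _ _ _).
exact: next_path_cons xx' x'p (IH yz zp).
Qed.

(* Decreases along the blackening loop, so that [#|S|.+1] iterations suffice. *)
Definition exits_after t q :=
  #|[set z | [exists j : 'I_(size t), [&& q < j, j.+1 < size t & t`_j == z]]]|.

Lemma exits_after_next t z q q' :
  q.+2 < size t -> t`_q.+1 = z -> last_exit t z q' -> exits_after t q' < exits_after t q.
Proof.
move=> q2t tz ez; have qq' : q < q' by apply: (last_exit_max ez).
apply/proper_card/properP; split.
  apply/subsetP => y; rewrite !inE => /existsP [j /and3P [q'j jt tj]].
  by apply/existsP; exists j; rewrite jt tj andbT (ltn_trans qq').
exists z; rewrite inE.
  by apply/existsP; exists (Ordinal (ltnW q2t)); rewrite /= tz eqxx q2t ltnSn.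
apply/negP => /existsP [j /and3P [q'j jt /eqP tj]].
by case: ez => _ _ /(_ j q'j jt).
Qed.

Lemma blacken_loop_path t n x y c f q :
  0 < size t -> tracks_next t n -> next_path n t`_(size t).-1 x y ->
  last_exit t x q -> exits_after t q < f ->
  blacken_loop f (Some t`_(size t).-1) n (Some x) c y.
Proof.
move=> t0 [next_exit next_def] path.
elim: path c f q => [{}x|{}x z {}y xz zp _ IH] c [|f] q ex //= fuel.
  exact: blacken_loop_start.
rewrite xz; case: eqP => [[]//|_].
have [q' [exz tz]] := next_exit _ _ xz.
rewrite -(last_exit_uniq exz ex) {q ex} in fuel *.
have q2t : q'.+2 < size t.
  case: (ltnP q'.+2 (size t)) => // tq2; case: zp.
  by have [q1t _ _] := exz; rewrite -tz; congr nth; lia.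
case nz: (n (Some z)) => [w|]; last by case: (next_def z q'.+1 q2t tz).
have [q2 [ezq2 _]] := next_exit _ _ nz.
apply: (IH _ _ q2 ezq2); have := exits_after_next q2t tz ezq2; lia.
Qed.

Lemma forbidden_or_path t n q r :
  tracks_next t n -> q <= r < size t -> next_path n t`_(size t).-1 t`_(size t).-1 t`_q ->
  forbidden t t`_r \/ next_path n t`_(size t).-1 t`_(size t).-1 t`_r.
Proof.
set p := t`_(size t).-1 => -[next_exit next_def].
have [m] := ubnP (size t - q); elim: m q => // m IH q qm /andP [qr rt] path.
case: (eqVneq r q) => [->|rq]; first by right.
have q1t : q.+1 < size t by lia.
case nq: (n (Some t`_q)) => [z|]; last by case: (next_def t`_q q q1t erefl).
have [q2 [exq tz]] := next_exit _ _ nq.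
have qq2 : q <= q2 by apply: (last_exit_max exq).
have [q2t _ _] := exq.
have path_z : next_path n p p z.
  case: (eqVneq z p) => [->|/eqP zp]; first exact: next_path_nil.
  exact: next_path_rcons path nq zp.
case: (eqVneq t`_q.+1 z) => [tq1|ntq1].
  by apply: (IH q.+1); rewrite ?tq1 //; lia.
have qq2' : q < q2 by rewrite ltn_neqAle qq2 andbT; apply: contra_neq ntq1 => ->.
case: (leqP r q2) => rq2; last by apply: (IH q2.+1); rewrite ?tz //; lia.
left; exists q, r, q2; split => //; first lia.
by have [_ -> _] := exq; split => //; rewrite tz; apply/eqP.
Qed.

Lemma forbidden_by_step_next t n a x z :
  tracks_next t n -> forbidden_by_step t a x -> n (Some x) = Some z -> forbidden_by_step t a z.
Proof.
move=> [next_exit _] [i [j [ij jt [ei nia ej]]]] xz.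
have [k [exk tz]] := next_exit _ _ xz; have [kt _ _] := exk.
have ik : i <= k.
  case: (ltnP j.+1 (size t)) => jt'; first by have := last_exit_max exk jt' ej; lia.
  by apply: (last_exit_max exk); rewrite ?ei -?ej; [lia | congr nth; lia].
by exists i, k.+1; split => //; lia.
Qed.

Lemma no_forbidden_by_step t n a d :
  ~ swap_pattern t -> tracks_next t n ->
  n (Some t`_(size t).-1) \in [:: None; Some a] -> ~ forbidden_by_step t a d.
Proof.
move=> nop [next_exit next_def] nlast [i [j [ij jt [ei nia _]]]].
have it : i.+1 < size t by lia.
move: nlast; rewrite !inE => /orP [/eqP|/eqP nla]; first exact: (next_def _ i it ei).
have [k [exk tk]] := next_exit _ _ nla; have [kt tk' _] := exk.
have ik : i < k.
  rewrite ltn_neqAle (last_exit_max exk it ei) andbT; apply/eqP => ik.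
  by apply: nia; rewrite ik.
by apply: nop; exists i, k, k, (size t).-1; split; rewrite ?tk ?tk' //; lia.
Qed.

Definition blacken_step (p : Pst S) n a c : Cst S :=
  if (n p != None) && (n p != Some a) then blacken_loop #|S|.+1 p n p c else c.

Lemma blacken_step_mono p n a c d : c d -> blacken_step p n a c d.
Proof. by rewrite /blacken_step; case: ifP => // _; apply: blacken_loop_mono. Qed.

Lemma deltaE p n c a : delta (p, n, c) a =
  (Some a, [ffun d => if d == p then Some a else n d],
   let c1 := blacken_step p n a c in if c1 a then [ffun => true] else c1).
Proof. by []. Qed.

Lemma blacken_stepE t n c a :
  ~ swap_pattern t -> tracks_next t n -> (forall d, c d <-> forbidden t d) ->
  forall d, blacken_step (Some (last x0 t)) n a c d <-> forbidden t d \/ forbidden_by_step t a d.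
Proof.
move=> nop next_n black_c d; rewrite -(nth_last x0) /blacken_step.
set p := t`_(size t).-1.
case: ifP => [/andP [/eqP np_def /eqP npa]|/negbT]; last first.
  rewrite negb_and !negbK black_c => np; split=> [|[//|]]; first by left.
  by move=> fb; case: (no_forbidden_by_step nop next_n _ fb); rewrite !inE.
case pz: (n (Some p)) np_def npa => [z|] // _ za.
have [q [exq tqz]] := next_n.1 _ _ pz; have [qt tq _] := exq.
have t0 : 0 < size t by lia.
split.
  have fb_p : forbidden_by_step t a p.
    exists q, (size t).-1; split; rewrite ?tq ?tqz //; try lia.
    by split => // za'; apply: za; rewrite za'.
  case/(blacken_loop_closed fb_p) => [y w|/black_c|];
    [exact: forbidden_by_step_next | by left | by right].
case=> [/black_c/blacken_loop_mono //|[i [j [ij jt [ei _ ej]]]]].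
have /forbidden_or_path : next_path n p p t`_i by rewrite ei; exact: next_path_nil.
case/(_ j next_n); first by rewrite (ltnW ij).
  by rewrite ej => /black_c/blacken_loop_mono.
rewrite ej => path; apply: blacken_loop_path t0 next_n path exq _.
by rewrite ltnS; apply: max_card.
Qed.

Definition state_inv t (q : state S) : Prop :=
  let: (p, n, c) := q in
  [/\ p = Some (last x0 t), tracks_next t n & forall d, c d <-> swap_pattern t \/ forbidden t d].

Lemma state_inv_rcons t q a : 0 < size t -> state_inv t q -> state_inv (rcons t a) (delta q a).
Proof.
case: q => [[p n] c] t0 [-> next_n black_c]; rewrite deltaE; split => [||d /=].
- by rewrite last_rcons.
- exact: tracks_next_rcons.
case: (classic (swap_pattern t)) => [pt|nop].
  rewrite blacken_step_mono ?ffunE; last by apply/black_c; left.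
  by split => // _; left; apply: swap_pattern_rcons.
have black_c' e : c e <-> forbidden t e.
  by split => [/black_c []|fe] //; apply/black_c; right.
have c1E := blacken_stepE a nop next_n black_c'.
have patE := swap_pattern_rconsE a t0 nop.
case: ifP => c1a; first by rewrite ffunE; split => // _; left; apply/patE/c1E.
rewrite forbidden_rcons // -c1E; split => [|[/patE/c1E|//]]; first by right.
by rewrite c1a.
Qed.

Lemma state_inv_foldl t : 0 < size t -> state_inv t (foldl (@delta S) (q0 S) t).
Proof.
elim/last_ind: t => [|[|b t] a IH] // _; rewrite foldl_rcons.
  2: by apply: state_inv_rcons => //; apply: IH.
rewrite /= /delta /q0 !ffunE /=; split => // [|d].
  by split => [x y|//]; rewrite !ffunE.
rewrite ffunE; split => // -[[i [j [k [l [? ? ? /=]]]]]|[i [j [k [? ? /=]]]]]; lia.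
Qed.

Lemma accepts_no_pattern w : accepts w <-> ~ swap_pattern w.
Proof.
rewrite /accepts; case: w => [|b w].
  by split => [_ [i [j [k [l [? ? ? /=]]]]]|_]; [lia | apply/existsP; exists x0; rewrite ffunE].
have := @state_inv_foldl (b :: w) erefl; case: foldl => [[p n] c] [_ _ black_c] /=.
split=> [/existsP [d /negP cd] pat|nop]; first by apply/cd/black_c; left.
apply/existsP; exists (b :: w)`_(size (b :: w)).-1; apply/negP => /black_c [//|].
exact: not_forbidden_last.
Qed.

End UniqueEulerianTrails.

Theorem mainTheorem3 (S : finType) (hS : 0 < #|S|) (w : seq S) :
  accepts w <-> inL w.
Proof.
have /card_gt0P [x0 _] := hS.
exact: iff_trans (accepts_no_pattern x0 w) (iff_sym (inL_swap_patternN x0 w)).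
Qed.
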